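(* Let $(A,\mathcal H)$ be a commutative Hopf algebroid. A Hopf ideal $I$ of $\mathcal H$ is normal if and only if $(\mathscr G_A,\mathscr G_{\mathcal H/I})$ is a normal affine subgroupoid of $(\mathscr G_A,\mathscr G_{\mathcal H})$; consequently $I\mapsto(\mathscr G_A,\mathscr G_{\mathcal H/I})$ is a bijection between normal Hopf ideals of $\mathcal H$ and normal affine subgroupoids of $(\mathscr G_A,\mathscr G_{\mathcal H})$.
   Context: A commutative Hopf algebroid $(A,\mathcal H)$ over a field $\Bbbk$: commutative $\Bbbk$-algebras $A,\mathcal H$ with algebra maps $s,t:A\to\mathcal H$, $\varepsilon:\mathcal H\to A$, $\Delta:\mathcal H\to\mathcal H\otimes_A\mathcal H$ (left factor an $A$-module via $t$, right via $s$), $\mathcal S:\mathcal H\to\mathcal H$ such that $(\mathcal H,\Delta,\varepsilon)$ is a coassociative counital $A$-coring, $\mathcal Ss=t$, $\mathcal St=s$, $\mathcal S^2=\mathrm{id}$, $\sum\mathcal S(u_1)u_2=t\varepsilon(u)$, $\sum u_1\mathcal S(u_2)=s\varepsilon(u)$ ($\Delta(u)=\sum u_1\otimes_Au_2$). A Hopf ideal is an ideal $I$ with $\varepsilon(I)=0$, $\Delta(I)\subseteq$ image of $\mathcal H\otimes_AI+I\otimes_A\mathcal H$, $\mathcal S(I)\subseteq I$. Let $\langle s-t\rangle$ be the ideal generated by all $s(a)-t(a)$ and $\overline{\mathcal H}=\mathcal H/\langle s-t\rangle$ with classes $\bar x$, an $A$-algebra via $\eta(a)=\overline{s(a)}$.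 A Hopf ideal $I$ is normal if $\langle s-t\rangle\subseteq I$ and for every $x\in I$, $\sum\overline{x_2}\otimes_A\mathcal S(x_1)x_3\in\overline{\mathcal H}\otimes_A\mathcal H$ lies in the image of $(I/\langle s-t\rangle)\otimes_A\mathcal H$ ($\mathcal H$ an $A$-module via $s$). For a commutative $\Bbbk$-algebra $R$, $\mathscr G_A(R)=\mathrm{CAlg}_\Bbbk(A,R)$, $\mathscr G_{\mathcal H}(R)=\mathrm{CAlg}_\Bbbk(\mathcal H,R)$ form a groupoid (objects, arrows) with source $\varphi\mapsto\varphi s$, target $\varphi\mapsto\varphi t$, identity $x\mapsto x\varepsilon$, composition $(\psi\bullet\varphi)(h)=\sum\varphi(h_1)\psi(h_2)$, naturally in $R$. For a Hopf ideal $I$ with projection $\pi$, $\mathscr G_{\mathcal H/I}(R)=\mathrm{CAlg}_\Bbbk(\mathcal H/I,R)$, embedded by $f\mapsto f\pi$, is a wide subgroupoid (an affine subgroupoid). It is a normal affine subgroupoid if for every $R$ it is a normal subgroupoid of $(\mathscr G_A(R),\mathscr G_{\mathcal H}(R))$, meaning: it has the same objects, every arrow in it has equal source and target, and for every arrow $g$ of $\mathscr G_{\mathcal H}(R)$ and every arrow $f$ of the subgroupoid with source and target equal to the source of $g$, $gfg^{-1}$ is in the subgroupoid. *)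

From mathcomp Require Import ssreflect ssrfun ssrbool eqtype ssrnat seq bigop ssralg.
Set Implicit Arguments. Unset Strict Implicit. Unset Printing Implicit Defensive.
Import GRing.Theory.
Local Open Scope ring_scope.

(* MathComp's comAlgType excludes the zero ring, so a commutative      *)
(* k-algebra is encoded as a commutative (possibly zero) ring together *)
(* with its structure ring map k -> R.                                 *)

Definition ring_hom (R S : pzRingType) (f : R -> S) : Prop :=
  [/\ forall x y, f (x + y) = f x + f y,
      forall x y, f (x * y) = f x * f y
    & f 1 = 1].

Record kalg (k : fieldType) : Type := KAlg {
  kcarrier :> comPzRingType;
  kunit : k -> kcarrier;
  kunit_hom : ring_hom kunit }.

Definition kalg_hom (k : fieldType) (A B : kalg k) (f : A -> B) : Prop :=
  ring_hom f /\ forall c : k, f (kunit A c) = kunit B c.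

Definition is_ideal (R : pzRingType) (I : R -> Prop) : Prop :=
  [/\ I 0, (forall x y, I x -> I y -> I (x + y)) & (forall r x, I x -> I (r * x))].

Definition ideal_gen (R : pzRingType) (S : R -> Prop) : R -> Prop :=
  fun x => exists rs : seq (R * R),
    (forall p, p \in rs -> S p.2) /\ x = \sum_(p <- rs) p.1 * p.2.

(* Tensor products of commutative algebras B (x)_A C = pushouts in     *)
(* CAlg_k of B <-f- A -g-> C, given by their universal property.       *)
Record pushout (k : fieldType) (A B C : kalg k) (f : A -> B) (g : A -> C) : Type :=
 Pushout {
  po_T : kalg k;
  po_i1 : B -> po_T;
  po_i2 : C -> po_T;
  po_i1_hom : kalg_hom po_i1;
  po_i2_hom : kalg_hom po_i2;
  po_comm : forall a, po_i1 (f a) = po_i2 (g a);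
  po_lift : forall R : kalg k, (B -> R) -> (C -> R) -> po_T -> R;
  po_lift_spec : forall (R : kalg k) (u : B -> R) (v : C -> R),
     kalg_hom u -> kalg_hom v -> (forall a, u (f a) = v (g a)) ->
     [/\ kalg_hom (@po_lift R u v),
         forall b, @po_lift R u v (po_i1 b) = u b
       & forall c, @po_lift R u v (po_i2 c) = v c];
  po_uniq : forall (R : kalg k) (h1 h2 : po_T -> R),
     kalg_hom h1 -> kalg_hom h2 ->
     (forall b, h1 (po_i1 b) = h2 (po_i1 b)) ->
     (forall c, h1 (po_i2 c) = h2 (po_i2 c)) -> forall x, h1 x = h2 x }.
Arguments pushout {k A B C} f g.
Arguments po_lift {k A B C f g} p R u v.

Record quotient_alg (k : fieldType) (H : kalg k) (J : H -> Prop) : Type :=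
 QuotientAlg {
  q_T : kalg k;
  q_map : H -> q_T;
  q_hom : kalg_hom q_map;
  q_surj : forall y, exists x, q_map x = y;
  q_ker : forall x, q_map x = 0 <-> J x }.
Arguments quotient_alg {k H} J.

(* ha_T2 = H (x)_A H (left factor an A-module via t, right via s),     *)
(* ha_T3 = (H (x)_A H) (x)_A H.                                        *)
Record hopf_algebroid (k : fieldType) (A H : kalg k) : Type := HopfAlgebroid {
  ha_s : A -> H;
  ha_t : A -> H;
  ha_eps : H -> A;
  ha_S : H -> H;
  ha_T2 : pushout ha_t ha_s;
  ha_Delta : H -> po_T ha_T2;
  ha_T3 : pushout (fun a => po_i2 ha_T2 (ha_t a)) ha_s;
  ha_s_hom : kalg_hom ha_s;
  ha_t_hom : kalg_hom ha_t;
  ha_eps_hom : kalg_hom ha_eps;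
  ha_S_hom : kalg_hom ha_S;
  ha_Delta_hom : kalg_hom ha_Delta;
  (* Delta and eps are A-bimodule maps (A-coring structure) *)
  ha_Delta_s : forall a, ha_Delta (ha_s a) = po_i1 ha_T2 (ha_s a);
  ha_Delta_t : forall a, ha_Delta (ha_t a) = po_i2 ha_T2 (ha_t a);
  ha_eps_s : forall a, ha_eps (ha_s a) = a;
  ha_eps_t : forall a, ha_eps (ha_t a) = a;
  (* coassociativity: (Delta (x) id) o Delta = (id (x) Delta) o Delta *)
  ha_coassoc : forall h,
    po_lift ha_T2 (po_T ha_T3)
      (fun x => po_i1 ha_T3 (ha_Delta x)) (po_i2 ha_T3) (ha_Delta h) =
    po_lift ha_T2 (po_T ha_T3)
      (fun x => po_i1 ha_T3 (po_i1 ha_T2 x))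
      (fun x => po_lift ha_T2 (po_T ha_T3)
                  (fun y => po_i1 ha_T3 (po_i2 ha_T2 y)) (po_i2 ha_T3)
                  (ha_Delta x))
      (ha_Delta h);
  (* counit: (eps (x) id) Delta = id = (id (x) eps) Delta *)
  ha_counit_l : forall h,
    po_lift ha_T2 H (fun x => ha_s (ha_eps x)) id (ha_Delta h) = h;
  ha_counit_r : forall h,
    po_lift ha_T2 H id (fun x => ha_t (ha_eps x)) (ha_Delta h) = h;
  ha_S_s : forall a, ha_S (ha_s a) = ha_t a;
  ha_S_t : forall a, ha_S (ha_t a) = ha_s a;
  ha_S_invol : forall h, ha_S (ha_S h) = h;
  ha_antipode_l : forall u,
    po_lift ha_T2 H ha_S id (ha_Delta u) = ha_t (ha_eps u);
  ha_antipode_r : forall u,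
    po_lift ha_T2 H id ha_S (ha_Delta u) = ha_s (ha_eps u) }.

Unset Implicit Arguments.
Section HopfIdeals.
Variables (k : fieldType) (A H : kalg k) (HA : hopf_algebroid A H).

Local Notation s := (ha_s HA).
Local Notation t := (ha_t HA).
Local Notation T2 := (ha_T2 HA).
Local Notation T3 := (ha_T3 HA).
Local Notation Delta := (ha_Delta HA).

Definition hopf_ideal (I : H -> Prop) : Prop :=
  [/\ is_ideal I,
      forall x, I x -> ha_eps HA x = 0,
      forall x, I x -> ideal_gen
                 (fun y => exists z, I z /\ (y = po_i1 T2 z \/ y = po_i2 T2 z))
                 (Delta x)
    & forall x, I x -> I (ha_S HA x)].

Definition st_ideal : H -> Prop :=
  ideal_gen (fun y => exists a, y = s a - t a).

(* Normal Hopf ideals, relative to a quotient Hbar = H / <s - t> and to the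
   tensor product Q = Hbar (x)_A H  (Hbar an A-algebra via eta = q o s,
   H an A-module via s). *)
Definition normality_map
    (Hb : quotient_alg st_ideal)
    (Q : pushout (fun a => q_map Hb (s a)) s) : H -> po_T Q :=
  fun x =>
    po_lift T3 (po_T Q)
      (po_lift T2 (po_T Q)
         (fun y => po_i2 Q (ha_S HA y)) (fun y => po_i1 Q (q_map Hb y)))
      (po_i2 Q)
      (* x_1 (x) x_2 (x) x_3 *)
      (po_lift T2 (po_T T3)
         (fun y => po_i1 T3 (Delta y)) (po_i2 T3) (Delta x)).

Definition normal_hopf_ideal
    (Hb : quotient_alg st_ideal)
    (Q : pushout (fun a => q_map Hb (s a)) s) (I : H -> Prop) : Prop :=
  hopf_ideal I /\
  (forall x, st_ideal x -> I x) /\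
  (forall x, I x ->
     ideal_gen (fun y => exists z, I z /\ y = po_i1 Q (q_map Hb z))
               (normality_map Hb Q x)).

Definition gsrc (R : kalg k) (phi : H -> R) : A -> R := fun a => phi (s a).
Definition gtgt (R : kalg k) (phi : H -> R) : A -> R := fun a => phi (t a).
Definition gid (R : kalg k) (x : A -> R) : H -> R := fun h => x (ha_eps HA h).
(* (psi . phi)(h) = sum phi(h_1) psi(h_2) *)
Definition gcomp (R : kalg k) (psi phi : H -> R) : H -> R :=
  fun h => po_lift T2 R phi psi (Delta h).

(* arrows of the affine subgroupoid G_{H/I}(R), i.e. the image of
   CAlg_k(H/I, R) in CAlg_k(H, R) under f |-> f o pi *)
Definition sub_arrow (I : H -> Prop) (R : kalg k) (phi : H -> R) : Prop :=
  kalg_hom phi /\ forall x, I x -> phi x = 0.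

Definition is_inverse (R : kalg k) (g g' : H -> R) : Prop :=
  kalg_hom g' /\
  (forall a, gsrc R g' a = gtgt R g a) /\ (forall a, gtgt R g' a = gsrc R g a) /\
  (forall h, gcomp R g' g h = gid R (gsrc R g) h) /\
  (forall h, gcomp R g g' h = gid R (gtgt R g) h).

(* normal subgroupoid at R (it is wide, i.e. has all objects, by construction) *)
Definition normal_subgroupoid_at (I : H -> Prop) (R : kalg k) : Prop :=
  (forall f, sub_arrow I R f -> forall a, gsrc R f a = gtgt R f a) /\
  (forall g f, kalg_hom g -> sub_arrow I R f ->
     (forall a, gsrc R f a = gsrc R g a) -> (forall a, gtgt R f a = gsrc R g a) ->
     forall g', is_inverse R g g' -> sub_arrow I R (gcomp R g (gcomp R f g'))).

Definition normal_affine_subgroupoid (I : H -> Prop) : Prop :=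
  forall R : kalg k, normal_subgroupoid_at I R.

Definition same_subgroupoid (I J : H -> Prop) : Prop :=
  forall (R : kalg k) (phi : H -> R), sub_arrow I R phi <-> sub_arrow J R phi.

End HopfIdeals.
Arguments hopf_ideal {k A H} HA I.
Arguments st_ideal {k A H} HA _.
Arguments normality_map {k A H HA} Hb Q _.
Arguments normal_hopf_ideal {k A H HA} Hb Q I.
Arguments gsrc {k A H} HA {R} phi _.
Arguments gtgt {k A H} HA {R} phi _.
Arguments gid {k A H} HA {R} x _.
Arguments gcomp {k A H} HA {R} psi phi _.
Arguments sub_arrow {k H} I {R} phi.
Arguments is_inverse {k A H} HA {R} g g'.
Arguments normal_subgroupoid_at {k A H} HA I R.
Arguments normal_affine_subgroupoid {k A H} HA I.
Arguments same_subgroupoid {k H} I J.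

(* For an arrow g and a loop f of G_{H/I}(R) at the source of g, the inverse of g is
   g o S, so the conjugate g f g^-1 sends x to sum g(S x1) f(x2) g(x3).  As f kills
   <s - t>, the pair (f, g) factors through Hbar (x)_A H, and this conjugate is the image
   of the normality element sum xbar2 (x) S(x1) x3 of x.  So if I is normal, every such
   conjugate kills I; conversely the two coprojections into the quotient of
   Hbar (x)_A H by the image of I form the universal pair (f, g).  Finally an ideal is
   the kernel of H -> H/I, so it is determined by its affine subgroupoid. *)

From HB Require Import structures.
From mathcomp Require Import ssreflect ssrfun ssrbool eqtype seq choice bigop ssralg ring.
From Stdlib Require Import ClassicalEpsilon FunctionalExtensionality PropExtensionality.
Set Implicit Arguments. Unset Strict Implicit. Unset Printing Implicit Defensive.
Import GRing.Theory.
Local Open Scope ring_scope.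

Section RingHom.
Variables (R S : pzRingType) (f : R -> S).
Hypothesis hf : ring_hom f.

Lemma ring_homB x y : f (x - y) = f x - f y.
Proof. by case: hf => fD _ _; apply: (addIr (f y)); rewrite -fD !subrK. Qed.

Lemma ring_hom0 : f 0 = 0.
Proof. by rewrite -(subrr 0) ring_homB subrr. Qed.

Lemma ring_hom_eq x y : f (x - y) = 0 <-> f x = f y.
Proof.
by rewrite ring_homB; split=> [/eqP|->]; [rewrite subr_eq0 => /eqP | rewrite subrr].
Qed.

Lemma ring_hom_sum (rs : seq (R * R)) :
  f (\sum_(p <- rs) p.1 * p.2) = \sum_(p <- rs) f p.1 * f p.2.
Proof.
case: hf => fD fM _; elim: rs => [|p rs IH]; first by rewrite !big_nil ring_hom0.
by rewrite !big_cons fD fM IH.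
Qed.

End RingHom.

Lemma kalg_hom_comp (k : fieldType) (A B C : kalg k) (f : A -> B) (g : B -> C) :
  kalg_hom f -> kalg_hom g -> kalg_hom (fun x => g (f x)).
Proof.
move=> [[fD fM f1] fk] [[gD gM g1] gk].
by split; first split=> [x y|x y|]; rewrite ?fD ?gD ?fM ?gM ?f1 ?g1 // => c; rewrite fk gk.
Qed.

Lemma kalg_hom_id (k : fieldType) (A : kalg k) : kalg_hom (fun x : A => x).
Proof. by []. Qed.

Section IdealLemmas.
Variables (R : pzRingType) (J : R -> Prop).
Hypothesis idJ : is_ideal J.

Lemma ideal0 : J 0. Proof. by case: idJ. Qed.
Lemma idealD x y : J x -> J y -> J (x + y). Proof. by case: idJ => _ + _; apply. Qed.
Lemma idealM r x : J x -> J (r * x). Proof. by case: idJ => _ _; apply. Qed.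
Lemma idealN x : J x -> J (- x). Proof. by rewrite -mulN1r; apply: idealM. Qed.
Lemma idealB x y : J x -> J y -> J (x - y). Proof. by move=> Jx /idealN; apply: idealD. Qed.

End IdealLemmas.

Section IdealGen.
Variables (R : pzRingType) (G : R -> Prop).

Lemma ideal_gen_ideal : is_ideal (ideal_gen G).
Proof.
split.
- by exists [::]; rewrite big_nil.
- move=> _ _ [r1 [G1 ->]] [r2 [G2 ->]]; exists (r1 ++ r2); rewrite big_cat; split=> // p.
  by rewrite mem_cat => /orP[/G1|/G2].
- move=> r _ [rs [Grs ->]]; exists [seq (r * p.1, p.2) | p <- rs]; split.
    by move=> _ /mapP[p /Grs Gp ->].
  by rewrite big_map mulr_sumr; apply: eq_bigr => p _; rewrite mulrA.
Qed.

Lemma ideal_gen_base x : G x -> ideal_gen G x.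
Proof.
move=> Gx; exists [:: (1, x)]; rewrite big_seq1 mul1r; split=> // p.
by rewrite inE => /eqP ->.
Qed.

Lemma ideal_gen_min (I : R -> Prop) x :
  is_ideal I -> (forall y, G y -> I y) -> ideal_gen G x -> I x.
Proof.
move=> idI GI [rs [Grs ->]]; elim: rs Grs => [|p rs IH] Grs.
  by rewrite big_nil; apply: ideal0 idI.
rewrite big_cons; apply: (idealD idI).
  by apply: (idealM idI); apply: GI; apply: Grs; rewrite inE eqxx.
by apply: IH => q q_rs; apply: Grs; rewrite inE q_rs orbT.
Qed.

Lemma ideal_gen_ker (S : pzRingType) (f : R -> S) x :
  ring_hom f -> (forall y, G y -> f y = 0) -> ideal_gen G x -> f x = 0.
Proof.
move=> hf fG [rs [Grs ->]]; rewrite ring_hom_sum // big_seq big1 // => p /Grs /fG ->.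
by rewrite mulr0.
Qed.

End IdealGen.

Section QuotientRing.
Variables (R : comPzRingType) (J : R -> Prop).
Hypothesis idJ : is_ideal J.

Definition coset_rep (x : R) : R := epsilon (inhabits 0) (fun y => J (y - x)).

Lemma coset_repP x : J (coset_rep x - x).
Proof.
apply: (epsilon_spec (inhabits 0) (fun y => J (y - x))).
by exists x; rewrite subrr; apply: ideal0 idJ.
Qed.

Lemma coset_rep_eq x y : J (x - y) -> coset_rep x = coset_rep y.
Proof.
move=> Jxy; rewrite /coset_rep; congr epsilon.
apply: functional_extensionality => z; apply: propositional_extensionality.
have -> : z - y = z - x + (x - y) by rewrite addrA subrK.
split=> [Jzx|]; first exact: idealD.
by move=> /(idealB idJ)-/(_ _ Jxy); rewrite addrK.
Qed.

Lemma coset_rep_idem x : coset_rep (coset_rep x) = coset_rep x.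
Proof. exact/coset_rep_eq/coset_repP. Qed.

Definition ideal_quot := {x : R | coset_rep x == x}.

HB.instance Definition _ := Choice.on ideal_quot.

Definition coset (x : R) : ideal_quot :=
  exist _ (coset_rep x) (introT eqP (coset_rep_idem x)).

Lemma coset_eq x y : coset x = coset y <-> J (x - y).
Proof.
split=> [/(congr1 val) /= eq_xy|/coset_rep_eq eq_xy]; last exact: val_inj.
have := idealB idJ (coset_repP y) (coset_repP x); rewrite eq_xy.
by have -> : coset_rep y - y - (coset_rep y - x) = x - y by ring.
Qed.

Lemma coset_val (a : ideal_quot) : coset (val a) = a.
Proof. by case: a => x ex; apply: val_inj; apply/eqP. Qed.

Lemma ideal_quot_ind (P : ideal_quot -> Prop) : (forall x, P (coset x)) -> forall a, P a.
Proof. by move=> Pc a; rewrite -(coset_val a). Qed.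

Let add (a b : ideal_quot) := coset (val a + val b).
Let opp (a : ideal_quot) := coset (- val a).
Let mul (a b : ideal_quot) := coset (val a * val b).

Lemma cosetD x y : coset (x + y) = add (coset x) (coset y).
Proof.
apply/coset_eq => /=.
have -> : x + y - (coset_rep x + coset_rep y) =
  - ((coset_rep x - x) + (coset_rep y - y)) by ring.
by apply/(idealN idJ)/(idealD idJ); apply: coset_repP.
Qed.

Lemma cosetN x : coset (- x) = opp (coset x).
Proof.
apply/coset_eq => /=; have -> : - x - - coset_rep x = coset_rep x - x by ring.
exact: coset_repP.
Qed.

Lemma cosetM x y : coset (x * y) = mul (coset x) (coset y).
Proof.
apply/coset_eq => /=.
have -> : x * y - coset_rep x * coset_rep y =
  - (coset_rep y * (coset_rep x - x) + x * (coset_rep y - y)) by ring.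
by apply/(idealN idJ)/(idealD idJ); apply: (idealM idJ); apply: coset_repP.
Qed.

Let addqA : associative add.
Proof. by do 3!elim/ideal_quot_ind=> ?; rewrite -!cosetD addrA. Qed.
Let addqC : commutative add.
Proof. by do 2!elim/ideal_quot_ind=> ?; rewrite -!cosetD addrC. Qed.
Let add0q : left_id (coset 0) add.
Proof. by elim/ideal_quot_ind=> x; rewrite -cosetD add0r. Qed.
Let addNq : left_inverse (coset 0) opp add.
Proof. by elim/ideal_quot_ind=> x; rewrite -cosetN -cosetD addNr. Qed.
HB.instance Definition _ := GRing.isZmodule.Build ideal_quot addqA addqC add0q addNq.

Let mulqA : associative mul.
Proof. by do 3!elim/ideal_quot_ind=> ?; rewrite -!cosetM mulrA. Qed.
Let mulqC : commutative mul.
Proof. by do 2!elim/ideal_quot_ind=> ?; rewrite -!cosetM mulrC. Qed.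
Let mul1q : left_id (coset 1) mul.
Proof. by elim/ideal_quot_ind=> x; rewrite -cosetM mul1r. Qed.
Let mulqDl : left_distributive mul add.
Proof. by do 3!elim/ideal_quot_ind=> ?; rewrite -cosetD -!cosetM -cosetD mulrDl. Qed.
HB.instance Definition _ :=
  GRing.Zmodule_isComPzRing.Build ideal_quot mulqA mulqC mul1q mulqDl.

Definition ideal_quot_ring : comPzRingType := ideal_quot.

Lemma coset_hom : ring_hom (coset : R -> ideal_quot_ring).
Proof. by split=> [x y|x y|]; [exact: cosetD | exact: cosetM |]. Qed.

End QuotientRing.

Section QuotientAlg.
Variables (k : fieldType) (B : kalg k) (J : B -> Prop).
Hypothesis idJ : is_ideal J.

Let q : B -> ideal_quot_ring idJ := coset idJ.

Lemma coset_unit_hom : ring_hom (fun c => q (kunit B c)).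
Proof.
have [qD qM q1] := coset_hom idJ; have [uD uM u1] := kunit_hom B.
by split=> [x y|x y|]; rewrite ?uD ?uM ?u1.
Qed.

Definition quot_kalg : kalg k := KAlg coset_unit_hom.

Definition quotient_by : quotient_alg J.
Proof.
refine (@QuotientAlg k B J quot_kalg q _ _ _).
- by split=> //; exact: coset_hom.
- by move=> y; exists (val y); apply: coset_val.
- by move=> x; rewrite -[0 : quot_kalg]/(q 0) coset_eq subr0.
Defined.

End QuotientAlg.

Section QuotientAlgTheory.
Variables (k : fieldType) (B : kalg k) (J : B -> Prop) (Qb : quotient_alg J).
Local Notation q := (q_map Qb).

Lemma q_map_eq x y : q x = q y <-> J (x - y).
Proof. by rewrite -(q_ker Qb); symmetry; apply: ring_hom_eq; case: (q_hom Qb). Qed.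

Lemma q_map_sub_arrow : sub_arrow J q.
Proof. by split; [exact: q_hom | move=> x /q_ker]. Qed.

Lemma q_map_factor (R : kalg k) (f : B -> R) :
  kalg_hom f -> (forall x, J x -> f x = 0) ->
  exists fb : q_T Qb -> R, kalg_hom fb /\ forall x, fb (q x) = f x.
Proof.
move=> hf fJ; have [[fD fM f1] fk] := hf; have [[qD qM q1] qk] := q_hom Qb.
pose pre y := epsilon (inhabits 0) (fun x => q x = y).
have preK y : q (pre y) = y := epsilon_spec _ _ (@q_surj _ _ _ Qb y).
have f_q x y : q x = q y -> f x = f y.
  by move=> /q_map_eq /fJ /(ring_hom_eq (proj1 hf)).
exists (fun y => f (pre y)); split; last by move=> x; apply: f_q; rewrite preK.
split; first split=> [x y|x y|].
- by rewrite -fD; apply: f_q; rewrite qD !preK.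
- by rewrite -fM; apply: f_q; rewrite qM !preK.
- by rewrite -f1; apply: f_q; rewrite q1 preK.
- by move=> c; rewrite -fk; apply: f_q; rewrite qk preK.
Qed.

End QuotientAlgTheory.

Lemma ideal_sub_arrowP (k : fieldType) (H : kalg k) (I : H -> Prop) x :
  is_ideal I -> I x <-> forall (R : kalg k) (phi : H -> R), sub_arrow I phi -> phi x = 0.
Proof.
move=> idI; split=> [Ix R phi [_ phiI]|phiI]; first exact: phiI.
exact/(q_ker (quotient_by idI))/phiI/q_map_sub_arrow.
Qed.

Lemma same_subgroupoid_eq (k : fieldType) (H : kalg k) (I J : H -> Prop) :
  is_ideal I -> is_ideal J -> same_subgroupoid I J -> forall x, I x <-> J x.
Proof.
move=> idI idJ IJ x; rewrite (ideal_sub_arrowP _ idI) (ideal_sub_arrowP _ idJ).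
by split=> phi0 R phi /IJ; apply: phi0.
Qed.

Section Pushout.
Variables (k : fieldType) (A B C : kalg k) (f : A -> B) (g : A -> C) (p : pushout f g).

Section Lift.
Variables (R : kalg k) (u : B -> R) (v : C -> R).
Hypotheses (hu : kalg_hom u) (hv : kalg_hom v) (uv : forall a, u (f a) = v (g a)).

Lemma po_lift_hom : kalg_hom (po_lift p R u v).
Proof. by case: (po_lift_spec p hu hv uv). Qed.

Lemma po_lift_i1 b : po_lift p R u v (po_i1 p b) = u b.
Proof. by case: (po_lift_spec p hu hv uv). Qed.

Lemma po_lift_i2 c : po_lift p R u v (po_i2 p c) = v c.
Proof. by case: (po_lift_spec p hu hv uv). Qed.

Lemma po_lift_unique (h : po_T p -> R) : kalg_hom h ->
  (forall b, h (po_i1 p b) = u b) -> (forall c, h (po_i2 p c) = v c) ->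
  forall x, h x = po_lift p R u v x.
Proof.
move=> hh h1 h2; apply: po_uniq => // [|b|c]; first exact: po_lift_hom.
  by rewrite po_lift_i1.
by rewrite po_lift_i2.
Qed.

End Lift.

Lemma po_lift_comp (R S : kalg k) (u : B -> R) (v : C -> R) (phi : R -> S) :
  kalg_hom u -> kalg_hom v -> (forall a, u (f a) = v (g a)) -> kalg_hom phi ->
  forall x, phi (po_lift p R u v x) = po_lift p S (fun b => phi (u b)) (fun c => phi (v c)) x.
Proof.
move=> hu hv uv hphi; apply: po_lift_unique => [||a||b|c]; do ?exact: kalg_hom_comp.
- by rewrite uv.
- exact/kalg_hom_comp/hphi/po_lift_hom.
- by rewrite po_lift_i1.
- by rewrite po_lift_i2.
Qed.

End Pushout.
Arguments po_lift_comp {k A B C f g} p {R S u v phi}.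

Lemma eq_po_lift (k : fieldType) (A B C : kalg k) (f : A -> B) (g : A -> C) (p : pushout f g)
    (R : kalg k) (u u' : B -> R) (v v' : C -> R) :
  u =1 u' -> v =1 v' -> po_lift p R u v =1 po_lift p R u' v'.
Proof. by move=> /functional_extensionality -> /functional_extensionality ->. Qed.

Section HopfAlgebroid.
Variables (k : fieldType) (A H : kalg k) (HA : hopf_algebroid A H).
Local Notation s := (ha_s HA).
Local Notation t := (ha_t HA).
Local Notation eps := (ha_eps HA).
Local Notation S := (ha_S HA).
Local Notation T2 := (ha_T2 HA).
Local Notation T3 := (ha_T3 HA).
Local Notation Delta := (ha_Delta HA).
Local Notation gcomp := (gcomp HA).

Let hs := ha_s_hom HA.
Let ht := ha_t_hom HA.
Let heps := ha_eps_hom HA.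
Let hS := ha_S_hom HA.
Let hDelta := ha_Delta_hom HA.

Definition coprod3_l h :=
  po_lift T2 (po_T T3) (fun x => po_i1 T3 (Delta x)) (po_i2 T3) (Delta h).

Definition coprod3_r h :=
  po_lift T2 (po_T T3) (fun x => po_i1 T3 (po_i1 T2 x))
    (fun x => po_lift T2 (po_T T3) (fun y => po_i1 T3 (po_i2 T2 y)) (po_i2 T3) (Delta x))
    (Delta h).

Section Lift3.
Variables (R : kalg k) (u v w : H -> R).
Hypotheses (hu : kalg_hom u) (hv : kalg_hom v) (hw : kalg_hom w).
Hypotheses (uv : forall a, u (t a) = v (s a)) (vw : forall a, v (t a) = w (s a)).

Let huv : kalg_hom (po_lift T2 R u v) := po_lift_hom T2 hu hv uv.
Let uvw a : po_lift T2 R u v (po_i2 T2 (t a)) = w (s a).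
Proof. by rewrite po_lift_i2. Qed.
Let L := po_lift T3 R (po_lift T2 R u v) w.
Let hL : kalg_hom L := po_lift_hom T3 huv hw uvw.

Lemma lift3_coprod3_l h : L (coprod3_l h) = gcomp w (gcomp v u) h.
Proof.
have hi1D : kalg_hom (fun x => po_i1 T3 (Delta x)) := kalg_hom_comp hDelta (po_i1_hom T3).
have c3 a : po_i1 T3 (Delta (t a)) = po_i2 T3 (s a).
  by rewrite ha_Delta_t; exact: po_comm.
rewrite /coprod3_l (po_lift_comp T2 hi1D (po_i2_hom T3) c3 hL).
by apply: eq_po_lift => x; rewrite /L ?po_lift_i1 ?po_lift_i2.
Qed.

Lemma lift3_coprod3_r h : L (coprod3_r h) = gcomp (gcomp w v) u h.
Proof.
have hi12 : kalg_hom (fun y => po_i1 T3 (po_i2 T2 y)) :=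
  kalg_hom_comp (po_i2_hom T2) (po_i1_hom T3).
have hi11 : kalg_hom (fun y => po_i1 T3 (po_i1 T2 y)) :=
  kalg_hom_comp (po_i1_hom T2) (po_i1_hom T3).
have c3 a : po_i1 T3 (po_i2 T2 (t a)) = po_i2 T3 (s a) by exact: po_comm.
pose M := po_lift T2 (po_T T3) (fun y => po_i1 T3 (po_i2 T2 y)) (po_i2 T3).
have hM : kalg_hom M := po_lift_hom T2 hi12 (po_i2_hom T3) c3.
have LM y : L (M y) = po_lift T2 R v w y.
  rewrite (po_lift_comp T2 hi12 (po_i2_hom T3) c3 hL).
  by apply: eq_po_lift => x; rewrite /L ?po_lift_i1 ?po_lift_i2.
have c3' a : po_i1 T3 (po_i1 T2 (t a)) = M (Delta (s a)).
  rewrite ha_Delta_s /M (po_lift_i1 T2 hi12 (po_i2_hom T3) c3).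
  by congr (po_i1 T3 _); exact: po_comm.
rewrite /coprod3_r -/M (po_lift_comp T2 hi11 (kalg_hom_comp hDelta hM) c3' hL).
by apply: eq_po_lift => x; rewrite ?LM /L ?po_lift_i1.
Qed.

End Lift3.

Lemma gcomp_hom (R : kalg k) (psi phi : H -> R) :
  kalg_hom psi -> kalg_hom phi -> (forall a, phi (t a) = psi (s a)) ->
  kalg_hom (gcomp psi phi).
Proof. by move=> hpsi hphi c; apply: kalg_hom_comp hDelta (po_lift_hom T2 hphi hpsi c). Qed.

Lemma gcomp_t (R : kalg k) (psi phi : H -> R) :
  kalg_hom psi -> kalg_hom phi -> (forall a, phi (t a) = psi (s a)) ->
  forall a, gcomp psi phi (t a) = psi (t a).
Proof. by move=> hpsi hphi c a; rewrite /gcomp ha_Delta_t po_lift_i2. Qed.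

Lemma gcompA (R : kalg k) (u v w : H -> R) :
  kalg_hom u -> kalg_hom v -> kalg_hom w ->
  (forall a, u (t a) = v (s a)) -> (forall a, v (t a) = w (s a)) ->
  gcomp w (gcomp v u) =1 gcomp (gcomp w v) u.
Proof.
by move=> hu hv hw uv vw h; rewrite -lift3_coprod3_l // /coprod3_l ha_coassoc lift3_coprod3_r.
Qed.

Lemma eq_gcomp (R : kalg k) (psi psi' phi phi' : H -> R) :
  psi =1 psi' -> phi =1 phi' -> gcomp psi phi =1 gcomp psi' phi'.
Proof. by move=> /functional_extensionality -> /functional_extensionality ->. Qed.

Lemma gcomp_idl (R : kalg k) (phi : H -> R) (x : A -> R) :
  kalg_hom phi -> (forall a, phi (t a) = x a) -> gcomp (gid HA x) phi =1 phi.
Proof.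
move=> hphi phix h; rewrite -{2}(ha_counit_r HA h).
have c a : t a = t (eps (s a)) by rewrite ha_eps_s.
rewrite (po_lift_comp T2 (kalg_hom_id H) (kalg_hom_comp heps ht) c hphi).
by apply: eq_po_lift => y //=; rewrite phix.
Qed.

Lemma gcomp_idr (R : kalg k) (phi : H -> R) (x : A -> R) :
  kalg_hom phi -> (forall a, phi (s a) = x a) -> gcomp phi (gid HA x) =1 phi.
Proof.
move=> hphi phix h; rewrite -{2}(ha_counit_l HA h).
have c a : s (eps (t a)) = s a by rewrite ha_eps_t.
rewrite (po_lift_comp T2 (kalg_hom_comp heps hs) (kalg_hom_id H) c hphi).
by apply: eq_po_lift => y //=; rewrite phix.
Qed.

Lemma gcompVg (R : kalg k) (g : H -> R) :
  kalg_hom g -> gcomp (fun y => g (S y)) g =1 gid HA (gsrc HA g).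
Proof.
move=> hg h; have c a : t a = S (s a) by rewrite ha_S_s.
by rewrite /gcomp -(po_lift_comp T2 (kalg_hom_id H) hS c hg) ha_antipode_r.
Qed.

Lemma gcompgV (R : kalg k) (g : H -> R) :
  kalg_hom g -> gcomp g (fun y => g (S y)) =1 gid HA (gtgt HA g).
Proof.
move=> hg h; have c a : S (t a) = s a by rewrite ha_S_t.
by rewrite /gcomp -(po_lift_comp T2 hS (kalg_hom_id H) c hg) ha_antipode_l.
Qed.

Lemma is_inverse_antipode (R : kalg k) (g : H -> R) :
  kalg_hom g -> is_inverse HA g (fun y => g (S y)).
Proof.
move=> hg; split; first exact: kalg_hom_comp.
split=> [a|]; first by rewrite /gsrc /gtgt ha_S_s.
split=> [a|]; first by rewrite /gsrc /gtgt ha_S_t.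
by split; [exact: gcompVg | exact: gcompgV].
Qed.

Lemma is_inverseE (R : kalg k) (g g' : H -> R) :
  kalg_hom g -> is_inverse HA g g' -> g' =1 (fun y => g (S y)).
Proof.
move=> hg [hg' [g's [_ [g'g _]]]] h.
have hgS : kalg_hom (fun y => g (S y)) := kalg_hom_comp hS hg.
have gSt a : g (S (t a)) = g (s a) by rewrite ha_S_t.
rewrite -(gcomp_idr hg' g's) (eq_gcomp (frefl g') (fun y => esym (gcompgV hg y))).
rewrite gcompA //; last by move=> a; exact: esym (g's a).
rewrite (eq_gcomp g'g (frefl (fun y => g (S y)))).
exact: gcomp_idl.
Qed.

End HopfAlgebroid.

Section Normality.
Variables (k : fieldType) (A H : kalg k) (HA : hopf_algebroid A H).
Variables (Hb : quotient_alg (st_ideal HA))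
  (Q : pushout (fun a => q_map Hb (ha_s HA a)) (ha_s HA)).
Local Notation s := (ha_s HA).
Local Notation t := (ha_t HA).
Local Notation S := (ha_S HA).
Local Notation T2 := (ha_T2 HA).
Local Notation T3 := (ha_T3 HA).
Local Notation gcomp := (gcomp HA).
Local Notation q := (q_map Hb).

Lemma st_ideal_st a : st_ideal HA (s a - t a).
Proof. by apply: ideal_gen_base; exists a. Qed.

Lemma q_map_t a : q (t a) = q (s a).
Proof. by symmetry; apply/q_map_eq/st_ideal_st. Qed.

Lemma normality_mapE (R : kalg k) (Phi : po_T Q -> R) : kalg_hom Phi -> forall x,
  Phi (normality_map Hb Q x) =
  gcomp (fun y => Phi (po_i2 Q y))
    (gcomp (fun y => Phi (po_i1 Q (q y))) (fun y => Phi (po_i2 Q (S y)))) x.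
Proof.
move=> hPhi x.
have hi2S : kalg_hom (fun y => po_i2 Q (S y)) := kalg_hom_comp (ha_S_hom HA) (po_i2_hom Q).
have hi1q : kalg_hom (fun y => po_i1 Q (q y)) := kalg_hom_comp (q_hom Hb) (po_i1_hom Q).
have c1 a : po_i2 Q (S (t a)) = po_i1 Q (q (s a)) by rewrite ha_S_t po_comm.
pose M := po_lift T2 (po_T Q) (fun y => po_i2 Q (S y)) (fun y => po_i1 Q (q y)).
have c2 a : M (po_i2 T2 (t a)) = po_i2 Q (s a).
  by rewrite /M (po_lift_i2 T2 hi2S hi1q c1) q_map_t po_comm.
rewrite /normality_map -/(coprod3_l HA x) -/M.
rewrite (po_lift_comp T3 (po_lift_hom T2 hi2S hi1q c1) (po_i2_hom Q) c2 hPhi).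
rewrite (eq_po_lift (po_lift_comp T2 hi2S hi1q c1 hPhi) (frefl _)).
apply: lift3_coprod3_l => [|||a|a].
- exact: kalg_hom_comp hi2S hPhi.
- exact: kalg_hom_comp hi1q hPhi.
- exact: kalg_hom_comp (po_i2_hom Q) hPhi.
- by have -> := c1 a.
- by rewrite q_map_t po_comm.
Qed.

Lemma normal_hopf_ideal_affine (I : H -> Prop) :
  normal_hopf_ideal Hb Q I -> normal_affine_subgroupoid HA I.
Proof.
move=> [_ [stI normI]] R; split=> [f [hf fI] a|g f hg [hf fI] fs ft g' ginv].
  exact/(ring_hom_eq (proj1 hf))/fI/stI/st_ideal_st.
have [hg' [_ [g't _]]] := ginv.
have g'f a : g' (t a) = f (s a) := etrans (g't a) (esym (fs a)).
split.
  apply: gcomp_hom => [||a]; [exact: hg | exact: gcomp_hom | ].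
  by rewrite gcomp_t //; exact: ft.
have [fb [hfb fbq]] := q_map_factor Hb hf (fun y sy => fI y (stI y sy)).
have fbg a : fb (q (s a)) = g (s a) by rewrite fbq; exact: fs.
pose Phi := po_lift Q R fb g.
have hPhi : kalg_hom Phi := po_lift_hom Q hfb hg fbg.
have Phi1 y : Phi (po_i1 Q y) = fb y := po_lift_i1 Q hfb hg fbg y.
have Phi2 y : Phi (po_i2 Q y) = g y := po_lift_i2 Q hfb hg fbg y.
have PhiE x : gcomp g (gcomp f g') x = Phi (normality_map Hb Q x).
  rewrite normality_mapE //; apply: eq_gcomp => [y|]; first by rewrite Phi2.
  by apply: eq_gcomp => y; rewrite ?Phi1 ?fbq // Phi2 (is_inverseE hg ginv).
move=> x Ix; rewrite PhiE; apply: ideal_gen_ker (normI x Ix) => [|_ [z [Iz ->]]].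
  exact: (proj1 hPhi).
by rewrite Phi1 fbq fI.
Qed.

Lemma st_ideal_sub (I : H -> Prop) :
  is_ideal I -> normal_affine_subgroupoid HA I -> forall x, st_ideal HA x -> I x.
Proof.
move=> idI normI x; apply: ideal_gen_min => // _ [a ->].
apply/(ideal_sub_arrowP _ idI) => R phi phiI.
exact/(ring_hom_eq (proj1 (proj1 phiI)))/(proj1 (normI R)).
Qed.

Lemma normal_affine_hopf_ideal (I : H -> Prop) :
  hopf_ideal HA I -> normal_affine_subgroupoid HA I -> normal_hopf_ideal Hb Q I.
Proof.
move=> hI normI; have [idI _ _ _] := hI.
split=> //; split=> [|x Ix]; first exact: st_ideal_sub.
pose G y := exists z, I z /\ y = po_i1 Q (q z).
pose Qj := quotient_by (ideal_gen_ideal G); pose pi := q_map Qj.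
have hpi : kalg_hom pi := q_hom Qj.
pose f y := pi (po_i1 Q (q y)); pose g y := pi (po_i2 Q y).
have hf : kalg_hom f := kalg_hom_comp (kalg_hom_comp (q_hom Hb) (po_i1_hom Q)) hpi.
have hg : kalg_hom g := kalg_hom_comp (po_i2_hom Q) hpi.
have fI : sub_arrow I f.
  by split=> // z Iz; apply/(q_ker Qj)/ideal_gen_base; exists z.
have fs a : gsrc HA f a = gsrc HA g a by rewrite /gsrc /f /g po_comm.
have ft a : gtgt HA f a = gsrc HA g a by rewrite /gsrc /gtgt /f /g q_map_t po_comm.
have [_ conjI] := (proj2 (normI _)) g f hg fI fs ft _ (is_inverse_antipode HA hg).
by apply/(q_ker Qj); rewrite normality_mapE //; apply: conjI.
Qed.

End Normality.

Theorem proposition3p19 (k : fieldType) (A H : kalg k)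
    (HA : hopf_algebroid A H)
    (Hb : quotient_alg (st_ideal HA))
    (Q : pushout (fun a => q_map Hb (ha_s HA a)) (ha_s HA)) :
  (* a Hopf ideal is normal iff its affine subgroupoid is normal *)
  (forall I : H -> Prop, hopf_ideal HA I ->
     (normal_hopf_ideal Hb Q I <-> normal_affine_subgroupoid HA I)) /\
  (* injectivity of I |-> G_{H/I} on normal Hopf ideals *)
  (forall I J : H -> Prop,
     normal_hopf_ideal Hb Q I -> normal_hopf_ideal Hb Q J ->
     same_subgroupoid I J -> forall x, I x <-> J x) /\
  (* surjectivity onto normal affine subgroupoids *)
  (forall I : H -> Prop, hopf_ideal HA I -> normal_affine_subgroupoid HA I ->
     exists J : H -> Prop, normal_hopf_ideal Hb Q J /\ same_subgroupoid I J).
Proof.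
split=> [I hI|].
  by split; [exact: normal_hopf_ideal_affine | exact: normal_affine_hopf_ideal].
split=> [I J [[idI _ _ _] _] [[idJ _ _ _] _]|I hI normI].
  exact: same_subgroupoid_eq.
by exists I; split; [exact: normal_affine_hopf_ideal | move=> R phi].
Qed.
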